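(* Let $\Gamma=(V,E)$ be a $2$-connected finite simple graph with marked vertices $a,b$, symmetric over $a$ and $b$, generating the hierarchical lattice $\{\Gamma_n\}$, and let $R(q,y)=(q,r_q(y))$ be its renormalization mapping. Then there is no iterate $n\ge0$ such that $r_q^n(0)\equiv1-q$ identically in $q$.
   Context: Hierarchical lattice: $\Gamma_0$ a single edge, $\Gamma_1=\Gamma$, $\Gamma_{n+1}$ obtained by replacing each edge of $\Gamma$ with a copy of $\Gamma_n$ (marked vertices as endpoints). The renormalization mapping: $r_q(y)=\mathcal{U}_\Gamma(q,y)/\mathcal{V}_\Gamma(q,y)$, where for integer $q\ge2$, $\mathcal{U}_\Gamma=\sum_{\sigma(a)=\sigma(b)=1}y^{\mathcal{E}(\sigma)}$ and $\mathcal{V}_\Gamma=\sum_{\sigma(a)=1,\sigma(b)=2}y^{\mathcal{E}(\sigma)}$, the sums over $\sigma:V\to\{1,\dots,q\}$ and $\mathcal{E}(\sigma)$ the number of edges with equal endpoint values (these are polynomials in $(q,y)$). $2$-connected: at least three vertices and no cut vertex. *)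

From HB Require Import structures.
From mathcomp Require Import all_boot all_order all_algebra all_fingroup fraction.
Set Implicit Arguments. Unset Strict Implicit. Unset Printing Implicit Defensive.
Import Order.TTheory GRing.Theory Num.Theory FracField.
Local Open Scope ring_scope.

(* A finite simple graph is given by a symmetric irreflexive relation e on a finType V. *)

Definition edges (V : finType) (e : rel V) : {set {set V}} :=
  [set [set p.1; p.2] | p : V * V & e p.1 p.2].

(* E(sigma): number of edges whose two endpoints get equal values.
   Colours {1,...,q} are represented by 'I_q = {0,...,q-1}. *)
Definition energy (V : finType) (e : rel V) (q : nat) (s : {ffun V -> 'I_q}) : nat :=
  #|[set E0 in edges e | [forall x in E0, forall y in E0, s x == s y]]|.

(* U_Gamma(q,y): sum over sigma with sigma(a) = sigma(b) = colour "1" (index 0). *)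
Definition sumU (V : finType) (e : rel V) (a b : V) (q y : nat) : nat :=
  (\sum_(s : {ffun V -> 'I_q} | (val (s a) == 0%N) && (val (s b) == 0%N))
      y ^ energy e s)%N.

(* V_Gamma(q,y): sum over sigma with sigma(a) = "1" (index 0), sigma(b) = "2" (index 1). *)
Definition sumV (V : finType) (e : rel V) (a b : V) (q y : nat) : nat :=
  (\sum_(s : {ffun V -> 'I_q} | (val (s a) == 0%N) && (val (s b) == 1%N))
      y ^ energy e s)%N.

Definition connected_in (V : finType) (e : rel V) (S : {set V}) : Prop :=
  forall x y, x \in S -> y \in S ->
    connect [rel u v | [&& e u v, u \in S & v \in S]] x y.

Definition two_connected (V : finType) (e : rel V) : Prop :=
  [/\ (3 <= #|V|)%N, connected_in e [set: V]
    & forall v : V, connected_in e (~: [set v])].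

Definition ab_symmetric (V : finType) (e : rel V) (a b : V) : Prop :=
  exists phi : {perm V},
    [/\ forall x y, e (phi x) (phi y) = e x y, phi a = b & phi b = a].

Definition Kq := {fraction {poly rat}}.
Definition qK : Kq := tofrac ('X : {poly rat}).

(* A polynomial in y with coefficients in Q[q], viewed in Q(q)[y]. *)
Definition liftP (P : {poly {poly rat}}) : {poly Kq} :=
  map_poly (fun c : {poly rat} => (tofrac c : Kq)) P.

(* The rational map y |-> U(y)/V(y) over Q(q), in lowest terms, acting on the
   projective line P^1(Q(q)) = option Kq (None = infinity). *)
Definition rhat (U W : {poly Kq}) (x : option Kq) : option Kq :=
  let g := gcdp U W in
  let U' := U %/ g in
  let W' := W %/ g in
  match x with
  | Some y => if W'.[y] == 0 then None else Some (U'.[y] / W'.[y])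
  | None =>
      if (size W' < size U')%N then None
      else if size U' == size W' then Some (lead_coef U' / lead_coef W')
      else Some 0
  end.

From HB Require Import structures.
From mathcomp Require Import all_boot all_order all_algebra all_fingroup fraction.
From mathcomp Require Import zify.
Import Order.TTheory GRing.Theory Num.Theory FracField.
Set Implicit Arguments. Unset Strict Implicit. Unset Printing Implicit Defensive.
Local Open Scope ring_scope.
Local Notation "x %:F" := (@tofrac _ x).

(* Count degrees in q.  For a fixed integer y, U(q,y) and V(q,y) are sums over
   the q^(|V|-2) colourings with prescribed colours at a and b, so as
   polynomials in q they have degree at most |V|-2; moreover V(q,y) - q^(|V|-2)
   only involves the colourings with a monochromatic edge, of which there are
   O(q^(|V|-3)).  Hence, as polynomials in y, the coefficients of U have
   q-degree at most |V|-2, the constant coefficient of V has q-degree exactly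
   |V|-2, and the other coefficients of V have smaller q-degree.  It follows
   that r_q maps a rational function n/d of q with deg n <= deg d to another
   such function.  0 is of this kind and 1 - q is not. *)

Lemma lead_term_le (R : numDomainType) (p : {poly R}) (x : R) : 1 <= x ->
  `|lead_coef p| * x ^+ (size p).-1 <=
    `|p.[x]| + (\sum_(i < (size p).-1) `|p`_i|) * x ^+ (size p).-2.
Proof.
move=> x_ge1; have x_ge0 : 0 <= x := le_trans ler01 x_ge1.
case def_d: (size p) => [|d] /=.
  move/eqP: def_d; rewrite size_poly_eq0 => /eqP ->.
  by rewrite lead_coef0 normr0 !mul0r big_ord0 mul0r addr0.
rewrite horner_coef def_d big_ord_recr /= lead_coefE def_d /=.
set S := \sum_(i < d) _.
have S_le : `|S| <= (\sum_(i < d) `|p`_i|) * x ^+ d.-1.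
  apply: le_trans (ler_norm_sum _ _ _) _; rewrite mulr_suml ler_sum // => i _.
  rewrite normrM normrX (ger0_norm x_ge0) ler_wpM2l // ler_weXn2l //.
  by have := ltn_ord i; lia.
have -> : `|p`_d| * x ^+ d = `|(S + p`_d * x ^+ d) - S|.
  by rewrite addrC addKr normrM normrX (ger0_norm x_ge0).
by apply: le_trans (ler_normB _ _) _; rewrite lerD2l.
Qed.

Lemma size_le_of_natr_bound (R : archiRealFieldType) (p : {poly R}) (M : nat) (C : R) :
  (forall k : nat, (2 <= k)%N -> `|p.[k%:R]| <= C * k%:R ^+ M) -> (size p <= M.+1)%N.
Proof.
move=> p_le; rewrite leqNgt; apply/negP => M_lt.
set d := (size p).-1; set A := \sum_(i < d) `|p`_i|.
have d_gt0 : (0 < d)%N by rewrite /d; lia.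
have c_gt0 : 0 < `|lead_coef p| :> R.
  by rewrite normr_gt0 lead_coef_eq0 -size_poly_gt0 (leq_trans _ M_lt).
have A_ge0 : 0 <= A by rewrite sumr_ge0.
have lin_bound k : (2 <= k)%N -> `|lead_coef p| * k%:R <= `|C| + A.
  move=> k_ge2; have k_ge1 : 1 <= k%:R :> R by rewrite ler1n; lia.
  have kd_gt0 : 0 < k%:R ^+ d.-1 :> R by rewrite exprn_gt0 // (lt_le_trans ltr01).
  rewrite -(ler_pM2r kd_gt0) -mulrA -exprS prednK // mulrDl.
  apply: le_trans (lead_term_le p k_ge1) _; rewrite -/d -/A lerD2r.
  apply: le_trans (p_le k k_ge2) _.
  apply: le_trans (ler_wpM2r (exprn_ge0 _ (ler0n _ _)) (ler_norm C)) _.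
  by rewrite ler_wpM2l // ler_weXn2l //; lia.
pose B := (`|C| + A) / `|lead_coef p|.
have B_ge0 : 0 <= B by rewrite divr_ge0 // addr_ge0.
have := lin_bound _ (isT : (2 <= (Num.bound B).+2)%N).
rewrite mulrC -ler_pdivlMr // -/B leNgt => /negP; apply.
by apply: lt_le_trans (archi_boundP B_ge0) _; rewrite ler_nat; lia.
Qed.

Lemma poly_natr_eq0 (R : numDomainType) (p : {poly R}) :
  (forall m : nat, p.[m%:R] = 0) -> p = 0.
Proof.
move=> p_natr0; apply: (@roots_geq_poly_eq0 _ _ [seq m%:R | m <- iota 0 (size p)]).
- by apply/allP => _ /mapP[m _ ->]; apply/rootP.
- by rewrite map_inj_uniq ?iota_uniq // => m1 m2 /eqP; rewrite eqr_nat => /eqP.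
- by rewrite size_map size_iota.
Qed.

Lemma sizeY_le_of_horner_natr (R : numDomainType) (u : {poly {poly R}}) (n : nat) :
  (forall m : nat, (size u.[m%:R] <= n)%N) -> (sizeY u <= n)%N.
Proof.
move=> size_u; rewrite sizeYE; apply/leq_sizeP => i le_ni.
apply: poly_natr_eq0 => m.
have -> : ((swapXY u)`_i).[m%:R] = (u.[(m%:R)%:P])`_i by rewrite horner_polyC coef_map.
by rewrite polyC_natr nth_default // (leq_trans (size_u m)).
Qed.

Lemma dominant_coef0 (R : nzRingType) (u : {poly {poly R}}) (p : {poly R}) :
  (sizeY (u - p%:P) < size p)%N ->
  size u`_0 = size p /\ forall j, (0 < j)%N -> (size (u`_j)%R < size (u`_0)%R)%N.
Proof.
move=> small; have coef_u j : u`_j = (u - p%:P)`_j + (if j == 0%N then p else 0).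
  by rewrite coefB coefC subrK.
have size_coef j : (size ((u - p%:P)`_j)%R < size p)%N.
  exact: leq_ltn_trans (max_size_coefXY _ j) small.
have size_u0 : size u`_0 = size p by rewrite coef_u addrC size_polyDl.
split=> // j j_gt0.
by rewrite size_u0 coef_u -(prednK j_gt0) addr0.
Qed.

Definition pinned (V : finType) (q : nat) (S : {set V}) (c : V -> nat) :
    {set {ffun V -> 'I_q}} :=
  [set s : {ffun V -> 'I_q} | [forall x in S, val (s x) == c x]].

Lemma card_pinned (V : finType) (q : nat) (S : {set V}) (c : V -> nat) :
  {in S, forall x, c x < q}%N -> #|pinned q S c| = (q ^ #|~: S|)%N.
Proof.
move=> c_lt.
pose F x := if x \in S then [pred i : 'I_q | val i == c x] else predT.
have -> : pinned q S c = [set s in family F].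
  apply/setP => s; rewrite !inE; apply/forall_inP/familyP => s_F x.
    by rewrite /F; case: ifP => // x_S; rewrite inE /=; apply: s_F.
  by move=> x_S; have := s_F x; rewrite /F x_S.
rewrite cardsE card_family foldrE big_map big_enum /= (bigID (mem S)) /=.
rewrite big1 ?mul1n => [|x x_S].
  rewrite -prod_nat_const; apply: eq_big => [x|x x_S]; first by rewrite !inE.
  by rewrite /F (negbTE x_S) cardT size_enum_ord.
by rewrite /F x_S (eq_card (B := pred1 (Ordinal (c_lt x x_S)))) ?card1.
Qed.

Lemma card_pinned_eq_le (V : finType) (q : nat) (S : {set V}) (c : V -> nat) (z w : V) :
  (0 < q)%N -> {in S, forall x, c x < q}%N -> z \notin S -> w != z ->
  (#|[set s in pinned q S c | s z == s w]| <= q ^ #|~: S|.-1)%N.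
Proof.
move=> q_gt0 c_lt zNS wz.
(* Recolouring z is injective on this set, since z has the colour of w. *)
pose recolor (s : {ffun V -> 'I_q}) := [ffun x => if x == z then Ordinal q_gt0 else s x].
pose c' x := if x == z then 0%N else c x.
have card_img : #|pinned q (z |: S) c'| = (q ^ #|~: S|.-1)%N.
  rewrite card_pinned => [|x]; last by rewrite !inE /c'; case: eqP => // _ /c_lt.
  have zCS : z \in ~: S by rewrite inE.
  have -> : ~: (z |: S) = ~: S :\ z by apply/setP => x; rewrite !inE negb_or.
  by rewrite (cardsD1 z (~: S)) zCS.
rewrite -card_img -(card_in_imset (f := recolor)) => [|s1 s2].
  apply/subset_leq_card/subsetP => _ /imsetP[s + ->].
  rewrite !inE => /andP[/forall_inP s_pin _].
  by apply/forall_inP => x; rewrite !inE ffunE /c'; case: eqP => // _ /s_pin.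
rewrite !inE => /andP[_ /eqP s1zw] /andP[_ /eqP s2zw] /ffunP eq_rec.
apply/ffunP => x; case: (eqVneq x z) => [->|xz].
  by rewrite s1zw s2zw; have := eq_rec w; rewrite !ffunE (negbTE wz).
by have := eq_rec x; rewrite !ffunE (negbTE xz).
Qed.

Lemma natr_dist_le (R : realDomainType) (x y c : nat) :
  (x <= y + c)%N -> (y <= x + c)%N -> `|x%:R - y%:R : R| <= c%:R.
Proof. by move=> x_le y_le; rewrite ler_distl lerBlDr -!natrD !ler_nat x_le y_le. Qed.

Section Energy.

Variables (V : finType) (e : rel V) (q : nat).
Implicit Types (s : {ffun V -> 'I_q}) (m : nat).

Definition mono_count s : nat := \sum_(p : V * V | e p.1 p.2) (s p.1 == s p.2).

Lemma energy_le s : (energy e s <= #|edges e|)%N.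
Proof. by apply/subset_leq_card/subsetP => E0; rewrite inE => /andP[]. Qed.

Lemma mono_count_gt0 s : energy e s != 0%N -> (0 < mono_count s)%N.
Proof.
rewrite /energy cards_eq0 => /set0Pn[_ /setIdP[/imsetP[p ep ->] /forall_inP mono]].
have /forall_inP := mono p.1 (set21 _ _); move/(_ p.2 (set22 _ _)) => sp.
rewrite inE in ep; rewrite /mono_count (bigD1 p) //=.
by move/eqP: sp => ->; rewrite eqxx.
Qed.

Lemma expn_energy_le m s : (m ^ energy e s <= (m + 1) ^ #|edges e|)%N.
Proof.
have [->|E_gt0] := posnP (energy e s); first by rewrite expn_gt0 addn1.
apply: (@leq_trans ((m + 1) ^ energy e s)); first by rewrite leq_exp2r ?leq_addr.
by rewrite leq_pexp2l ?addn1 // energy_le.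
Qed.

Lemma pow_energy_dist (R : realDomainType) m s :
  `|(m ^ energy e s)%:R - 1 : R| <= (mono_count s * (m + 1) ^ #|edges e|)%:R.
Proof.
have [->|E_neq0] := eqVneq (energy e s) 0%N; first by rewrite subrr normr0.
have mE_le := expn_energy_le m s.
have Y_gt0 : (0 < (m + 1) ^ #|edges e|)%N by rewrite expn_gt0 addn1.
have t_gt0 := mono_count_gt0 E_neq0.
by apply: (@natr_dist_le _ _ 1%N); nia.
Qed.

End Energy.

Section PottsSums.

Variables (V : finType) (e : rel V) (a b : V).
Hypotheses (irr_e : irreflexive e) (ab : a != b).

Local Notation pinnedU q := (pinned q [set a; b] (fun=> 0%N)).
Local Notation pinnedV q := (pinned q [set a; b] (fun z => z == b : nat)).

Lemma card_setC2 : #|~: [set a; b]| = (#|V| - 2)%N.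
Proof. by have := cardsC [set a; b]; rewrite cards2 ab; lia. Qed.

Lemma sumU_pinned q m :
  sumU e a b q m = (\sum_(s in pinnedU q) m ^ energy e s)%N.
Proof.
apply: eq_bigl => s; rewrite inE.
apply/andP/forall_inP => [[sa sb] x /set2P[]->|s_pin] //.
by split; apply: s_pin; rewrite !inE eqxx ?orbT.
Qed.

Lemma sumV_pinned q m :
  sumV e a b q m = (\sum_(s in pinnedV q) m ^ energy e s)%N.
Proof.
apply: eq_bigl => s; rewrite inE.
apply/andP/forall_inP => [[sa sb] x /set2P[]->|s_pin]; rewrite ?eqxx ?(negbTE ab) //.
by have := s_pin a (set21 _ _); have := s_pin b (set22 _ _); rewrite eqxx (negbTE ab).
Qed.

Lemma sumU_le q m : (0 < q)%N ->
  (sumU e a b q m <= (m + 1) ^ #|edges e| * q ^ (#|V| - 2))%N.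
Proof.
move=> q_gt0; rewrite sumU_pinned.
apply: (@leq_trans (\sum_(s in pinnedU q) (m + 1) ^ #|edges e|)%N).
  by apply: leq_sum => s _; apply: expn_energy_le.
by rewrite sum_nat_const card_pinned // card_setC2 mulnC.
Qed.

Lemma card_mono_edge_le q x y : (2 <= q)%N -> e x y ->
  (#|[set s in pinnedV q | s x == s y]| <= q ^ (#|V| - 3))%N.
Proof.
move=> q_ge2 exy; have xy : x != y by apply: contraTneq exy => ->; rewrite irr_e.
have c_lt : {in [set a; b], forall z, (z == b : nat) < q}%N.
  by move=> z _; case: (z == b); lia.
have -> : (#|V| - 3 = #|~: [set a; b]|.-1)%N by rewrite card_setC2; lia.
have [xNab|/negPn xab] := boolP (x \notin [set a; b]).
  by apply: card_pinned_eq_le; rewrite // 1?eq_sym //; lia.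
have [yNab|/negPn yab] := boolP (y \notin [set a; b]).
  rewrite (eq_card (B := [set s in pinnedV q | s y == s x])).
    by apply: card_pinned_eq_le => //; lia.
  by move=> s; rewrite !inE eq_sym.
apply: (@leq_trans 0) => //.
rewrite leqn0 cards_eq0; apply/eqP/setP => s; rewrite !inE.
apply/negP => /andP[/forall_inP s_pin /eqP sxy].
have := eqP (s_pin x xab); rewrite sxy (eqP (s_pin y yab)).
move: xab yab xy; rewrite !inE => /orP[]/eqP-> /orP[]/eqP->;
  by rewrite ?eqxx // (negbTE ab).
Qed.

Lemma sumV_dist (R : realDomainType) q m : (2 <= q)%N ->
  `|(sumV e a b q m)%:R - (q ^ (#|V| - 2))%:R : R|
    <= (#|V| ^ 2 * (m + 1) ^ #|edges e| * q ^ (#|V| - 3))%:R.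
Proof.
move=> q_ge2; set F := pinnedV q.
have card_F : #|F| = (q ^ (#|V| - 2))%N.
  by rewrite card_pinned ?card_setC2 // => z _; case: (z == b); lia.
have mono_sum : (\sum_(s in F) mono_count e s <= #|V| ^ 2 * q ^ (#|V| - 3))%N.
  rewrite /mono_count exchange_big /=.
  apply: (@leq_trans (\sum_(p : V * V) q ^ (#|V| - 3))%N).
    rewrite [X in (X <= _)%N]big_mkcond; apply: leq_sum => p _; case: ifP => // ep.
    rewrite -big_mkcondr sum1dep_card.
    exact: card_mono_edge_le.
  by rewrite sum_nat_const card_prod mulnn.
rewrite sumV_pinned -/F -card_F -sum1_card !natr_sum -sumrB.
apply: le_trans (ler_norm_sum _ _ _) _.
apply: (@le_trans _ _ (\sum_(s in F) (mono_count e s * (m + 1) ^ #|edges e|)%:R)).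
  by apply: ler_sum => s _; apply: pow_energy_dist.
by rewrite -natr_sum ler_nat -big_distrl /= mulnAC leq_mul2r mono_sum orbT.
Qed.

End PottsSums.

Section PottsPolynomials.

Variables (V : finType) (e : rel V) (a b : V).
Hypotheses (irr_e : irreflexive e) (ab : a != b).

Lemma sizeY_sumU (PU : {poly {poly rat}}) :
  (forall q y : nat, (2 <= q)%N -> PU.[y%:R].[q%:R] = (sumU e a b q y)%:R) ->
  (sizeY PU <= (#|V| - 2).+1)%N.
Proof.
move=> PU_sumU; apply: sizeY_le_of_horner_natr => m.
apply: (@size_le_of_natr_bound _ _ _ ((m + 1) ^ #|edges e|)%:R) => k k_ge2.
by rewrite PU_sumU // normr_nat -natrX -natrM ler_nat sumU_le //; lia.
Qed.

Lemma sizeY_sumV (PV : {poly {poly rat}}) : (3 <= #|V|)%N ->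
  (forall q y : nat, (2 <= q)%N -> PV.[y%:R].[q%:R] = (sumV e a b q y)%:R) ->
  (sizeY (PV - ('X^(#|V| - 2))%:P) <= #|V| - 2)%N.
Proof.
move=> V_ge3 PV_sumV; apply: sizeY_le_of_horner_natr => m.
rewrite [X in (_ <= X)%N](_ : _ = (#|V| - 3).+1)%N; last by lia.
apply: (@size_le_of_natr_bound _ _ _ (#|V| ^ 2 * (m + 1) ^ #|edges e|)%:R) => k k_ge2.
rewrite hornerD hornerN hornerC hornerD hornerN hornerXn PV_sumV // -!natrX -natrM.
exact: sumV_dist.
Qed.

End PottsPolynomials.

(* The polynomial d^K P(n/d), provided size P <= K. *)
Definition homog (R : nzRingType) (P : {poly {poly R}}) (K : nat) (n d : {poly R}) :
    {poly R} :=
  \sum_(j < K) P`_j * (n ^+ j * d ^+ (K - j)).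

Lemma horner_map_tofrac (R : idomainType) (P : {poly {poly R}}) (K : nat) (n d : {poly R}) :
  d != 0 -> (size P <= K)%N ->
  (map_poly (@tofrac _) P).[n%:F / d%:F] = (homog P K n d)%:F / d%:F ^+ K.
Proof.
move=> d_neq0 P_le.
have dF_neq0 : d%:F != 0 by rewrite tofrac_eq0.
rewrite (@horner_coef_wide _ K) ?size_map_inj_poly //; last first.
  by move=> p1 p2 /eqP; rewrite tofrac_eq => /eqP.
rewrite rmorph_sum mulr_suml; apply: eq_bigr => j _.
have j_le := ltnW (ltn_ord j).
rewrite coef_map /= !rmorphM !rmorphXn /=.
have -> : d%:F ^+ K = d%:F ^+ j * d%:F ^+ (K - j) by rewrite -exprD subnKC.
by rewrite -mulrA expr_div_n -mulf_div divff ?expf_neq0 // mulr1.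
Qed.

Section HomogSize.

Variables (R : idomainType) (n d : {poly R}).
Hypotheses (d_neq0 : d != 0) (size_nd : (size n <= size d)%N).

Lemma size_monomial_le (j K : nat) : (j <= K)%N ->
  (size (n ^+ j * d ^+ (K - j))%R <= ((size d).-1 * K).+1)%N.
Proof.
move=> j_le; apply: leq_trans (size_polyMleq _ _) _.
have := size_poly_exp_leq n j; have := size_poly_exp_leq d (K - j).
have : ((size n).-1 * j <= (size d).-1 * j)%N by rewrite leq_mul2r -!subn1 leq_sub2r ?orbT.
have : ((size d).-1 * j + (size d).-1 * (K - j) = (size d).-1 * K)%N.
  by rewrite -mulnDr subnKC.
move: ((size n).-1 * j)%N ((size d).-1 * j)%N ((size d).-1 * (K - j))%N => x y z.
lia.
Qed.

Lemma size_homog_le (P : {poly {poly R}}) (K D : nat) :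
  (forall j, size (P`_j)%R <= D)%N -> (size (homog P K n d) <= D + (size d).-1 * K)%N.
Proof.
move=> size_P; apply: leq_trans (size_sum _ _ _) _; apply/bigmax_leqP => j _.
apply: leq_trans (size_polyMleq _ _) _.
have := leq_add (size_P j) (size_monomial_le (ltnW (ltn_ord j))).
by move/(leq_sub2r 1); rewrite !subn1 addnS.
Qed.

Lemma size_homog (P : {poly {poly R}}) (K : nat) : (0 < K)%N ->
  (forall j, (0 < j)%N -> (size (P`_j)%R < size (P`_0)%R)%N) ->
  size (homog P K n d) = (size (P`_0)%R + (size d).-1 * K)%N.
Proof.
move=> K_gt0 P0_dom.
have P0_neq0 : P`_0 != 0 by rewrite -size_poly_gt0 (leq_ltn_trans _ (P0_dom 1%N isT)).
have size_dK : size (d ^+ K) = ((size d).-1 * K).+1%N.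
  by rewrite -size_exp prednK // size_poly_gt0 expf_neq0.
have -> : homog P K n d = P`_0 * d ^+ K + homog (P - (P`_0)%:P) K n d.
  rewrite /homog -(prednK K_gt0) !big_ord_recl /= !coefB !coefC /= subrr mul0r add0r.
  rewrite subn0 expr0 mul1r; congr (_ + _); apply: eq_bigr => j _.
  by rewrite coefB coefC subr0.
have rest_lt : (size (homog (P - (P`_0)%:P) K n d) < size (P`_0)%R + (size d).-1 * K)%N.
  have coef_le j : (size ((P - (P`_0)%:P)`_j)%R <= (size (P`_0)%R).-1)%N.
    case: j => [|j]; rewrite coefB coefC /= ?subrr ?size_poly0 // subr0.
    by rewrite -ltnS prednK ?P0_dom // size_poly_gt0.
  apply: leq_ltn_trans (size_homog_le K coef_le) _.
  by rewrite ltn_add2r prednK // size_poly_gt0.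
by rewrite size_polyDl size_mul ?expf_neq0 // size_dK addnS.
Qed.

End HomogSize.

(* Rational functions of q of degree <= 0, i.e. bounded at q = oo. *)
Definition proper_frac (x : Kq) : Prop :=
  exists n d : {poly rat}, [/\ d != 0, (size n <= size d)%N & x = n%:F / d%:F].

Lemma proper_frac0 : proper_frac 0.
Proof. by exists 0, 1; rewrite oner_neq0 size_poly0 tofrac0 mul0r. Qed.

Lemma not_proper_frac_1_subq : ~ proper_frac (1 - qK).
Proof.
case=> n [d [d_neq0 size_nd eq_nd]].
have size_1subX : size (1 - 'X : {poly rat}) = 2%N.
  by rewrite -opprB size_polyN -(@polyC1 rat) size_XsubC.
have n_eq : n = (1 - 'X) * d.
  apply/eqP; rewrite -tofrac_eq tofracM tofracB tofrac1 -/qK eq_nd.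
  by rewrite divfK // tofrac_eq0.
have one_subX_neq0 : (1 - 'X : {poly rat}) != 0 by rewrite -size_poly_eq0 size_1subX.
by move: size_nd; rewrite n_eq size_mul // size_1subX add2n ltnn.
Qed.

Lemma rhat_Some (U W : {poly Kq}) (x : Kq) :
  W.[x] != 0 -> rhat U W (Some x) = Some (U.[x] / W.[x]).
Proof.
move=> Wx_neq0; rewrite /rhat; set g := gcdp U W.
have U_eq : U = U %/ g * g by rewrite divpK ?dvdp_gcdl.
have W_eq : W = W %/ g * g by rewrite divpK ?dvdp_gcdr.
move: Wx_neq0; rewrite [in W.[x]]W_eq hornerM mulf_eq0 negb_or => /andP[W'x_neq0 gx_neq0].
rewrite (negbTE W'x_neq0); congr Some.
by rewrite [in RHS]U_eq hornerM -mulf_div divff ?mulr1.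
Qed.

Section RenormalizationStep.

Variables PU PV : {poly {poly rat}}.
Hypotheses (PU_le : forall j, (size (PU`_j)%R <= size (PV`_0)%R)%N)
           (PV_dom : forall j, (0 < j)%N -> (size (PV`_j)%R < size (PV`_0)%R)%N).

Lemma rhat_proper_frac x : proper_frac x ->
  exists2 y, rhat (liftP PU) (liftP PV) (Some x) = Some y & proper_frac y.
Proof.
case=> n [d [d_neq0 size_nd ->]].
set K := (maxn (size PU) (size PV)).+1.
have dK_neq0 : d%:F ^+ K != 0 by rewrite expf_neq0 // tofrac_eq0.
have U_eval : (liftP PU).[n%:F / d%:F] = (homog PU K n d)%:F / d%:F ^+ K.
  by apply: horner_map_tofrac => //; apply/leqW/leq_maxl.
have W_eval : (liftP PV).[n%:F / d%:F] = (homog PV K n d)%:F / d%:F ^+ K.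
  by apply: horner_map_tofrac => //; apply/leqW/leq_maxr.
have size_W := size_homog d_neq0 size_nd (K := K) (ltn0Sn _) PV_dom.
have PV0_gt0 : (0 < size (PV`_0)%R)%N := leq_ltn_trans (leq0n _) (PV_dom (ltn0Sn 0)).
have W_neq0 : homog PV K n d != 0 by rewrite -size_poly_gt0 size_W addn_gt0 PV0_gt0.
rewrite rhat_Some ?W_eval ?mulf_neq0 ?invr_eq0 ?tofrac_eq0 //.
eexists; first reflexivity.
exists (homog PU K n d), (homog PV K n d); split => //.
  by rewrite size_W size_homog_le.
by rewrite U_eval invf_div mulrA divfK.
Qed.

Lemma iter_rhat_proper_frac k :
  exists2 y, iter k (rhat (liftP PU) (liftP PV)) (Some 0) = Some y & proper_frac y.
Proof.
elim: k => [|k [y iter_y y_proper]]; first by exists 0; last exact: proper_frac0.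
by rewrite iterS iter_y; apply: rhat_proper_frac.
Qed.

End RenormalizationStep.

Theorem proposition6p1 (V : finType) (e : rel V) (a b : V)
    (PU PV : {poly {poly rat}}) :
  symmetric e -> irreflexive e -> a != b ->
  two_connected e -> ab_symmetric e a b ->
  (forall q y : nat, (2 <= q)%N -> PU.[y%:R].[q%:R] = (sumU e a b q y)%:R) ->
  (forall q y : nat, (2 <= q)%N -> PV.[y%:R].[q%:R] = (sumV e a b q y)%:R) ->
  ~ exists n : nat,
      iter n (rhat (liftP PU) (liftP PV)) (Some 0) = Some (1 - qK).
Proof.
move=> _ irr_e ab [V_ge3 _ _] _ PU_sumU PV_sumV [k iter_k].
have [PV0_size PV_dom] : size PV`_0 = size ('X^(#|V| - 2) : {poly rat}) /\
    forall j, (0 < j)%N -> (size (PV`_j)%R < size (PV`_0)%R)%N.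
  by apply: dominant_coef0; rewrite size_polyXn ltnS (sizeY_sumV irr_e ab V_ge3 PV_sumV).
have PU_le j : (size (PU`_j)%R <= size (PV`_0)%R)%N.
  by rewrite PV0_size size_polyXn (leq_trans (max_size_coefXY _ _)) ?(sizeY_sumU ab PU_sumU).
have [y iter_y y_proper] := iter_rhat_proper_frac PU_le PV_dom k.
by apply: not_proper_frac_1_subq; move: iter_k; rewrite iter_y => -[<-].
Qed.
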